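(* Let $X,Y \in \mathcal{B(H)}$ and $q \in \mathcal{D'}$. Then \begin{itemize} \item[(a)] $\max\{w_q(X-Y),w_q(X+Y)\} \le w_q\left(\begin{bmatrix} X & Y\\ Y & X \end{bmatrix}\right) \le \max\{ \|X-Y\|, \|X+Y\|\}$, \item[(b)] $\frac{1}{2}\max\{w_q(X+Y),w_q(X-Y)\} \le w_q \left(\begin{bmatrix} 0 & X\\ Y & 0 \end{bmatrix}\right) \le \frac{1}{2}(\|X+Y\|+\|X-Y\|)$. \end{itemize}
   Context: $\mathcal{H}$ is a complex Hilbert space, $\mathcal{B(H)}$ the algebra of bounded linear operators on $\mathcal{H}$ with the operator norm, and $2\times 2$ operator matrices act on $\mathcal{H}\oplus\mathcal{H}$. $\mathcal{D}$ is the closed unit disc in $\mathbb{C}$ and $\mathcal{D'}=\mathcal{D}\setminus\{0\}$. For $|q|\le 1$, $W_q(T)=\{\langle Tx,y\rangle : \|x\|=\|y\|=1,\ \langle x,y\rangle=q\}$ and $w_q(T)=\sup_{w\in W_q(T)}|w|$. *)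

From HB Require Import structures.
From mathcomp Require Import all_boot all_order all_algebra.
From mathcomp Require Import complex.
From mathcomp Require Import boolp classical_sets reals.
Set Implicit Arguments.
Unset Strict Implicit.
Unset Printing Implicit Defensive.
Import Order.TTheory GRing.Theory Num.Theory.
Local Open Scope ring_scope.
Local Open Scope classical_set_scope.

Section Hilbert.
Variable R : realType.
Local Notation C := (R[i]).

Definition ipnorm (V : Type) (ip : V -> V -> C) (x : V) : R :=
  Num.sqrt (complex.Re (ip x x)).

Record is_hilbert (H : lmodType C) (ip : H -> H -> C) : Prop := {
  ip_linear_l : forall (a : C) (x y z : H), ip (a *: x + y) z = a * ip x z + ip y z;
  ip_conj_sym : forall x y : H, ip x y = conjc (ip y x);
  ip_ge0 : forall x : H, 0 <= ip x x;
  ip_definite : forall x : H, ip x x = 0 -> x = 0;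
  ip_complete : forall u : nat -> H,
    (forall e : R, 0 < e -> exists N : nat, forall m n : nat,
        (N <= m)%N -> (N <= n)%N -> ipnorm ip (u m - u n) < e) ->
    exists l : H, forall e : R, 0 < e -> exists N : nat, forall n : nat,
        (N <= n)%N -> ipnorm ip (u n - l) < e
}.

Definition bounded_linear (H : lmodType C) (ip : H -> H -> C) (T : H -> H) : Prop :=
  (forall (a : C) (x y : H), T (a *: x + y) = a *: T x + T y) /\
  (exists M : R, forall x : H, ipnorm ip (T x) <= M * ipnorm ip x).

Definition opnorm (V : Type) (ip : V -> V -> C) (T : V -> V) : R :=
  sup [set ipnorm ip (T x) | x in [set x | ipnorm ip x <= 1]].

Definition Wq (V : Type) (ip : V -> V -> C) (q : C) (T : V -> V) : set C :=
  [set w | exists x y : V, [/\ ipnorm ip x = 1, ipnorm ip y = 1,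
                              ip x y = q & w = ip (T x) y]].

Definition wq (V : Type) (ip : V -> V -> C) (q : C) (T : V -> V) : R :=
  sup [set Normc.normc w | w in Wq ip q T].

Definition ip2 (H : lmodType C) (ip : H -> H -> C) (u v : H * H) : C :=
  ip u.1 v.1 + ip u.2 v.2.

(* the 2x2 operator matrix [[A, B]; [D, E]] acting on H (+) H *)
Definition opmx2 (H : lmodType C) (A B D E : H -> H) (u : H * H) : H * H :=
  (A u.1 + B u.2, D u.1 + E u.2).

End Hilbert.

From HB Require Import structures.
From mathcomp Require Import all_boot all_order all_algebra.
From mathcomp Require Import complex.
From mathcomp Require Import boolp classical_sets reals.
From mathcomp Require Import ring lra.
Import Order.TTheory GRing.Theory Num.Theory.
Set Implicit Arguments.
Unset Strict Implicit.
Unset Printing Implicit Defensive.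
Local Open Scope ring_scope.
Local Open Scope complex_scope.
Local Open Scope classical_set_scope.

(* Upper bounds: w_q(T) <= ||T||, and both block operators have small norm.
   For T = [[X, Y], [Y, X]] the parallelogram law gives
   2 ||T u||^2 = ||(X+Y)(u1+u2)||^2 + ||(X-Y)(u1-u2)||^2, while
   2 ||u||^2 = ||u1+u2||^2 + ||u1-u2||^2; for T = [[0, X], [Y, 0]] write
   X = ((X+Y) + (X-Y))/2 and Y = ((X+Y) - (X-Y))/2.
   Lower bounds: for |h|^2 = 1/2 and |e| = 1 the map J x = (h x, e h x) is an
   isometry, so it maps the pairs (x, y) defining W_q to pairs defining W_q
   on H (+) H, and J^* T J is a multiple of X+Y or X-Y: for the first matrix
   with e = 1 and e = -1 it is X+Y and X-Y, for the second one with e = 1 and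
   e = i it is (X+Y)/2 and (i/2)(X-Y). *)

Section SupremumScaling.
Variable R : realType.
Implicit Types (A B : set R) (c m : R).

Lemma sup_ge0 A : (forall a, A a -> 0 <= a) -> 0 <= sup A.
Proof.
move=> A_ge0; have [supA|/sup_out -> //] := pselect (has_sup A).
have [a Aa] := supA.1; exact: le_trans (A_ge0 a Aa) (sup_upper_bound supA Aa).
Qed.

Lemma sup_le_ubound A m : 0 <= m -> ubound A m -> sup A <= m.
Proof.
move=> m_ge0 Am; have [A_n0|A0] := pselect (A !=set0); first exact: ge_sup.
by rewrite sup_out // => -[/A0].
Qed.

(* [sup] is 0 on sets without a supremum, hence the hypotheses on [B]. *)
Lemma ler_sup_scale A B c : 0 <= c -> (forall b, B b -> 0 <= b) ->
  has_ubound B -> (forall a, A a -> B (c * a)) -> c * sup A <= sup B.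
Proof.
move=> c_ge0 B_ge0 ubB AB; have [supA|/sup_out ->] := pselect (has_sup A);
  last by rewrite mulr0 sup_ge0.
have [->|c_neq0] := eqVneq c 0; first by rewrite mul0r sup_ge0.
have c_gt0 : 0 < c by rewrite lt_def c_neq0.
have [a Aa] := supA.1.
have supB : has_sup B by split; [exists (c * a); exact: AB|].
rewrite mulrC -ler_pdivlMr //; apply: ge_sup supA.1 _ => x Ax.
by rewrite ler_pdivlMr // mulrC; exact: sup_upper_bound (AB x Ax).
Qed.

End SupremumScaling.

Section ComplexNorm.
Variable R : realType.
Implicit Types (z : R[i]) (r : R).

Lemma normc_ge0 z : 0 <= Normc.normc z.
Proof. by case: z => a b; exact: sqrtr_ge0. Qed.

Lemma normc_sqr z : (Normc.normc z ^+ 2)%:C = z * conjc z.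
Proof.
case: z => a b; rewrite /= sqr_sqrtr ?addr_ge0 ?sqr_ge0 //; simpc.
by rewrite -!expr2 [b * a]mulrC addNr.
Qed.

Lemma Re_le_normc z : complex.Re z <= Normc.normc z.
Proof.
case: z => a b /=; apply: le_trans (ler_norm a) _.
by rewrite -sqrtr_sqr ler_wsqrtr // lerDl sqr_ge0.
Qed.

Lemma normc_real r : Normc.normc r%:C = `|r|.
Proof. by rewrite /= expr0n addr0 sqrtr_sqr. Qed.

Lemma normc_nat n : Normc.normc (n%:R : R[i]) = n%:R.
Proof. by have := normc_real n%:R; rewrite rmorph_nat ger0_norm. Qed.

Lemma conjcM (a b : R[i]) : conjc (a * b) = conjc a * conjc b.
Proof. exact: rmorphM. Qed.

End ComplexNorm.

Record is_inner_product (R : realType) (V : lmodType R[i]) (ip : V -> V -> R[i])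
    : Prop := {
  inner_linear_l : forall a x y z, ip (a *: x + y) z = a * ip x z + ip y z;
  inner_conj_sym : forall x y, ip x y = conjc (ip y x);
  inner_ge0 : forall x, 0 <= ip x x;
  inner_definite : forall x, ip x x = 0 -> x = 0 }.

Lemma hilbert_inner_product (R : realType) (V : lmodType R[i]) (ip : V -> V -> R[i]) :
  is_hilbert ip -> is_inner_product ip.
Proof. by case. Qed.

Section InnerProduct.
Variables (R : realType) (V : lmodType R[i]) (ip : V -> V -> R[i]).
Hypothesis ipP : is_inner_product ip.

Lemma ipDl x y z : ip (x + y) z = ip x z + ip y z.
Proof. by have := inner_linear_l ipP 1 x y z; rewrite scale1r mul1r. Qed.

Lemma ip0l z : ip 0 z = 0.
Proof. by apply: (addrI (ip 0 z)); rewrite -ipDl !addr0. Qed.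

Lemma ipZl a x z : ip (a *: x) z = a * ip x z.
Proof. by have := inner_linear_l ipP a x 0 z; rewrite !addr0 ip0l addr0. Qed.

Lemma ipNl x z : ip (- x) z = - ip x z.
Proof. by rewrite -scaleN1r ipZl mulN1r. Qed.

Lemma ipDr x y z : ip z (x + y) = ip z x + ip z y.
Proof. by rewrite !(inner_conj_sym ipP z) ipDl rmorphD. Qed.

Lemma ipZr a x z : ip z (a *: x) = conjc a * ip z x.
Proof. by rewrite !(inner_conj_sym ipP z) ipZl rmorphM. Qed.

Lemma ipNr x z : ip z (- x) = - ip z x.
Proof. by rewrite !(inner_conj_sym ipP z) ipNl rmorphN. Qed.

Definition ipE := (ipDl, ipDr, ipNl, ipNr, ipZl, ipZr).

Lemma ipnorm_ge0 x : 0 <= ipnorm ip x.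
Proof. exact: sqrtr_ge0. Qed.

Lemma ipxx x : ip x x = (ipnorm ip x ^+ 2)%:C.
Proof.
have := inner_ge0 ipP x; rewrite lecE => /andP[/eqP Im0 Re_ge0].
by rewrite sqr_sqrtr //; case: (ip x x) Im0 => a b /= ->.
Qed.

Lemma ipnorm_eq0 x : ipnorm ip x = 0 -> x = 0.
Proof. by move=> x0; apply: (inner_definite ipP); rewrite ipxx x0 expr0n. Qed.

Lemma ipnorm_sqr_eq x r : 0 <= r -> ip x x = (r ^+ 2)%:C -> ipnorm ip x = r.
Proof. by rewrite /ipnorm => r_ge0 ->; rewrite sqrtr_sqr ger0_norm. Qed.

Lemma ipnormZ a x : ipnorm ip (a *: x) = Normc.normc a * ipnorm ip x.
Proof.
apply: ipnorm_sqr_eq; first by rewrite mulr_ge0 ?normc_ge0 ?ipnorm_ge0.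
by rewrite ipZl ipZr mulrA -normc_sqr ipxx -rmorphM exprMn.
Qed.

Lemma ipnormN x : ipnorm ip (- x) = ipnorm ip x.
Proof. by apply: ipnorm_sqr_eq; rewrite ?ipnorm_ge0 // ipNl ipNr opprK ipxx. Qed.

Lemma ipnorm_double x : ipnorm ip (x + x) = 2 * ipnorm ip x.
Proof. by rewrite -mulr2n -scaler_nat ipnormZ normc_nat. Qed.

Lemma ipnorm_CauchySchwarz x y : Normc.normc (ip x y) <= ipnorm ip x * ipnorm ip y.
Proof.
have [->|y_neq0] := eqVneq y 0.
  by rewrite (inner_conj_sym ipP) ip0l conjc0 Normc.normc0 mulr_ge0 ?ipnorm_ge0.
set n := ipnorm ip y ^+ 2; set z := ip x y.
have n_gt0 : 0 < n.
  rewrite exprn_gt0 // lt_def ipnorm_ge0 andbT.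
  by apply: contra y_neq0 => /eqP/ipnorm_eq0 ->.
have expand : ip (n%:C *: x - z *: y) (n%:C *: x - z *: y)
    = n%:C * (n%:C * (ipnorm ip x ^+ 2)%:C - z * conjc z).
  by rewrite !ipE conjc_real [ip y x](inner_conj_sym ipP) !ipxx -/z -/n; ring.
have : 0 <= n * (n * ipnorm ip x ^+ 2 - Normc.normc z ^+ 2).
  apply: le_trans (exprn_ge0 2 (ipnorm_ge0 (n%:C *: x - z *: y))) _.
  move: expand; rewrite ipxx -normc_sqr -rmorphM -rmorphB -rmorphM.
  by move=> /complexI ->.
rewrite pmulr_rge0 // subr_ge0 mulrC /n -exprMn.
by rewrite ler_sqr ?nnegrE ?normc_ge0 ?mulr_ge0 ?ipnorm_ge0.
Qed.

Lemma ipnorm_sqrD x y : ipnorm ip (x + y) ^+ 2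
  = ipnorm ip x ^+ 2 + ipnorm ip y ^+ 2 + 2 * complex.Re (ip x y).
Proof.
apply: complexI; rewrite -ipxx !rmorphD /= -!ipxx rmorphM rmorph_nat -addcJ !ipE.
by rewrite [ip y x](inner_conj_sym ipP); ring.
Qed.

Lemma ipnormD x y : ipnorm ip (x + y) <= ipnorm ip x + ipnorm ip y.
Proof.
rewrite -ler_sqr ?nnegrE ?addr_ge0 ?ipnorm_ge0 // ipnorm_sqrD sqrrD.
have := Re_le_normc (ip x y); have := ipnorm_CauchySchwarz x y; lra.
Qed.

Lemma ipnorm_parallelogram x y : ipnorm ip (x + y) ^+ 2 + ipnorm ip (x - y) ^+ 2
  = 2 * (ipnorm ip x ^+ 2 + ipnorm ip y ^+ 2).
Proof.
apply: complexI; rewrite !rmorphD /= -!ipxx rmorphM rmorph_nat rmorphD /= -!ipxx.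
by rewrite !ipE; ring.
Qed.

Lemma ipnorm_sqr_le u v a : 0 <= a -> ipnorm ip v <= a * ipnorm ip u ->
  ipnorm ip v ^+ 2 <= a ^+ 2 * ipnorm ip u ^+ 2.
Proof. by move=> a_ge0; rewrite -exprMn ler_sqr ?nnegrE ?mulr_ge0 ?ipnorm_ge0. Qed.

End InnerProduct.

Section DirectSum.
Variables (R : realType) (V : lmodType R[i]) (ip : V -> V -> R[i]).
Hypothesis ipP : is_inner_product ip.

Lemma ip2_inner_product : is_inner_product (ip2 ip).
Proof.
split.
- by move=> a [x1 x2] [y1 y2] [z1 z2]; rewrite /ip2 /= !(inner_linear_l ipP); ring.
- move=> [x1 x2] [y1 y2]; rewrite /ip2 /= rmorphD.
  by rewrite (inner_conj_sym ipP x1) (inner_conj_sym ipP x2).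
- by move=> [x1 x2]; rewrite /ip2 addr_ge0 ?(inner_ge0 ipP).
- move=> [x1 x2]; rewrite /ip2 /= => /eqP; rewrite paddr_eq0 ?(inner_ge0 ipP) //.
  by case/andP=> /eqP/(inner_definite ipP) -> /eqP/(inner_definite ipP) ->.
Qed.

Lemma ipnorm_ip2 u : ipnorm (ip2 ip) u ^+ 2 = ipnorm ip u.1 ^+ 2 + ipnorm ip u.2 ^+ 2.
Proof.
by apply: complexI; rewrite -(ipxx ip2_inner_product) rmorphD /= -!(ipxx ipP).
Qed.

Lemma ipnorm_ip2_le u v m : 0 <= m ->
    ipnorm ip v.1 ^+ 2 + ipnorm ip v.2 ^+ 2
      <= m ^+ 2 * (ipnorm ip u.1 ^+ 2 + ipnorm ip u.2 ^+ 2) ->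
  ipnorm (ip2 ip) v <= m * ipnorm (ip2 ip) u.
Proof.
move=> m_ge0; rewrite -!ipnorm_ip2 -exprMn.
by rewrite ler_sqr ?nnegrE ?mulr_ge0 ?ipnorm_ge0.
Qed.

End DirectSum.

Section BoundedOperators.
Variables (R : realType) (V : lmodType R[i]) (ip : V -> V -> R[i]).
Hypothesis ipP : is_inner_product ip.

Lemma ipnorm0 : ipnorm ip 0 = 0.
Proof. by rewrite /ipnorm (ip0l ipP) sqrtr0. Qed.

Lemma bounded_linearD S T : bounded_linear ip S -> bounded_linear ip T ->
  bounded_linear ip (fun x => S x + T x).
Proof.
move=> [S_lin [MS leMS]] [T_lin [MT leMT]]; split.
  by move=> a x y; rewrite S_lin T_lin scalerDr addrACA.
exists (MS + MT) => x; rewrite mulrDl.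
exact: le_trans (ipnormD ipP _ _) (lerD (leMS x) (leMT x)).
Qed.

Lemma bounded_linearN T : bounded_linear ip T -> bounded_linear ip (fun x => - T x).
Proof.
move=> [T_lin [M leM]]; split; first by move=> a x y; rewrite T_lin opprD scalerN.
by exists M => x; rewrite (ipnormN ipP).
Qed.

Lemma opnorm_ge0 T : 0 <= opnorm ip T.
Proof. by apply: sup_ge0 => _ [x _ <-]; exact: ipnorm_ge0. Qed.

Variables (T : V -> V) (hT : bounded_linear ip T).
HB.instance Definition _ := GRing.isLinear.Build R[i] V V *:%R T hT.1.

Lemma ipnorm_le_opnorm x : ipnorm ip (T x) <= opnorm ip T * ipnorm ip x.
Proof.
have [_ [M leM]] := hT.
have [x0|x_neq0] := eqVneq (ipnorm ip x) 0; first by have := leM x; rewrite x0 !mulr0.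
set r := ipnorm ip x in x_neq0 *.
have r_gt0 : 0 < r by rewrite lt_def x_neq0 ipnorm_ge0.
have normZ v : ipnorm ip ((r^-1)%:C *: v) = r^-1 * ipnorm ip v.
  by rewrite (ipnormZ ipP) normc_real ger0_norm // invr_ge0 ltW.
have supT : has_sup [set ipnorm ip (T y) | y in [set y | ipnorm ip y <= 1]].
  split; first by exists 0, 0; rewrite /= ?linear0 ipnorm0.
  exists `|M| => _ [y /= y_le1 <-]; apply: le_trans (leM y) _.
  have := ipnorm_ge0 ip y; have := ler_norm M; have := normr_ge0 M; nra.
rewrite -ler_pdivrMr // mulrC -normZ -linearZ.
apply: (sup_upper_bound supT); exists ((r^-1)%:C *: x) => //=.
by rewrite normZ mulVf.
Qed.

Lemma ipnorm_sqr_le_opnorm M x : opnorm ip T <= M ->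
  ipnorm ip (T x) ^+ 2 <= M ^+ 2 * ipnorm ip x ^+ 2.
Proof.
move=> le_opnorm; apply: ipnorm_sqr_le.
  exact: le_trans (opnorm_ge0 T) le_opnorm.
exact: le_trans (ipnorm_le_opnorm x) (ler_wpM2r (ipnorm_ge0 _ _) le_opnorm).
Qed.

End BoundedOperators.

Section NumericalRadius.
Variables (R : realType) (V : lmodType R[i]) (ip : V -> V -> R[i]).
Hypothesis ipP : is_inner_product ip.
Variables (q : R[i]) (T : V -> V) (m : R).
Hypothesis leT : forall u, ipnorm ip (T u) <= m * ipnorm ip u.

Lemma Wq_normc_le w : Wq ip q T w -> Normc.normc w <= m.
Proof.
move=> [x [y [x1 y1 _ ->]]]; apply: le_trans (ipnorm_CauchySchwarz ipP _ _) _.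
by rewrite y1 mulr1 -[m]mulr1 -x1.
Qed.

Lemma wq_le : 0 <= m -> wq ip q T <= m.
Proof. by move=> m_ge0; apply: sup_le_ubound => // _ [w /Wq_normc_le ? <-]. Qed.

End NumericalRadius.

Lemma wq_ge_compression (R : realType) (V1 V : Type)
    (ip1 : V1 -> V1 -> R[i]) (ip : V -> V -> R[i]) (J : V1 -> V)
    (T1 : V1 -> V1) (T : V -> V) (a q : R[i]) (m : R) :
  (forall x y, ip (J x) (J y) = ip1 x y) ->
  (forall x y, ip (T (J x)) (J y) = a * ip1 (T1 x) y) ->
  (forall w, Wq ip q T w -> Normc.normc w <= m) ->
  Normc.normc a * wq ip1 q T1 <= wq ip q T.
Proof.
move=> isoJ compressT boundT; apply: ler_sup_scale.
- exact: normc_ge0.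
- by move=> _ [w _ <-]; exact: normc_ge0.
- by exists m => _ [w /boundT ? <-].
- move=> _ [w [x [y [x1 y1 xy ->]]] <-]; rewrite -Normc.normcM.
  exists (a * ip1 (T1 x) y) => //; exists (J x), (J y).
  by rewrite /ipnorm !isoJ compressT.
Qed.

Section DiagonalEmbedding.
Variables (R : realType) (V : lmodType R[i]) (ip : V -> V -> R[i]).
Hypothesis ipP : is_inner_product ip.

(* (1 + i)/2 has modulus 1/sqrt 2, without taking square roots. *)
Definition half_diag : R[i] := 2^-1 +i* 2^-1.

Definition diag_embed (e : R[i]) (x : V) : V * V :=
  (half_diag *: x, (e * half_diag) *: x).

Lemma half_diag_normc_sqr : half_diag * conjc half_diag = 2^-1.
Proof.
have -> : 2^-1 = (2^-1 : R)%:C :> R[i] by rewrite fmorphV rmorph_nat.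
by apply/eqP; rewrite eq_complex /=; apply/andP; split; apply/eqP; field.
Qed.

Variable e : R[i].
Hypothesis e_unit : e * conjc e = 1.

Lemma ip2_diag_embed x y : ip2 ip (diag_embed e x) (diag_embed e y) = ip x y.
Proof.
rewrite /ip2 /= !(ipZl ipP) !(ipZr ipP) conjcM.
transitivity (half_diag * conjc half_diag * (1 + e * conjc e) * ip x y).
  by ring.
by rewrite e_unit half_diag_normc_sqr -mulrA; field.
Qed.

Lemma ip2_opmx2_diag_embed (A B D E : V -> V) x y :
    scalable A -> scalable B -> scalable D -> scalable E ->
  ip2 ip (opmx2 A B D E (diag_embed e x)) (diag_embed e y)
  = 2^-1 * (ip (A x) y + e * ip (B x) y + conjc e * ip (D x) y + ip (E x) y).
Proof.
move=> AZ BZ DZ EZ; rewrite /ip2 /opmx2 /= AZ BZ DZ EZ !(ipE ipP) conjcM.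
transitivity (half_diag * conjc half_diag * (ip (A x) y + e * ip (B x) y
  + conjc e * ip (D x) y + e * conjc e * ip (E x) y)); first by ring.
by rewrite e_unit mul1r half_diag_normc_sqr.
Qed.

End DiagonalEmbedding.

Section BlockOperators.
Variables (R : realType) (H : lmodType R[i]) (ip : H -> H -> R[i]).
Hypothesis ipP : is_inner_product ip.
Variables (X Y : H -> H) (q : R[i]).
Hypotheses (hX : bounded_linear ip X) (hY : bounded_linear ip Y).
HB.instance Definition _ := GRing.isLinear.Build R[i] H H *:%R X hX.1.
HB.instance Definition _ := GRing.isLinear.Build R[i] H H *:%R Y hY.1.

Local Notation S := (fun x => X x + Y x).
Local Notation D := (fun x => X x - Y x).
Let hS : bounded_linear ip S := bounded_linearD ipP hX hY.
Let hD : bounded_linear ip D := bounded_linearD ipP hX (bounded_linearN ipP hY).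
Let ip2P := ip2_inner_product ipP.
Let X_scalable : scalable X. Proof. by move=> a v; rewrite linearZ. Qed.
Let Y_scalable : scalable Y. Proof. by move=> a v; rewrite linearZ. Qed.
Let zero_scalable : scalable (fun _ : H => 0 : H).
Proof. by move=> a v; rewrite scaler0. Qed.

Lemma ipnorm_opmx2_sym_le u : ipnorm (ip2 ip) (opmx2 X Y Y X u)
  <= Num.max (opnorm ip D) (opnorm ip S) * ipnorm (ip2 ip) u.
Proof.
set M := Num.max _ _.
have S_le : opnorm ip S <= M by rewrite le_max lexx orbT.
have D_le : opnorm ip D <= M by rewrite le_max lexx.
have M_ge0 : 0 <= M := le_trans (opnorm_ge0 ip S) S_le.
case: u => u1 u2; apply: ipnorm_ip2_le => //=.
have := ipnorm_parallelogram ipP (X u1 + Y u2) (Y u1 + X u2).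
have -> : X u1 + Y u2 + (Y u1 + X u2) = S (u1 + u2).
  by rewrite !linearD [Y u1 + X u2]addrC addrACA [Y u2 + Y u1]addrC.
have -> : X u1 + Y u2 - (Y u1 + X u2) = D (u1 - u2).
  by rewrite (linearB X) (linearB Y) opprB opprD [- Y u1 - X u2]addrC addrACA.
have := ipnorm_parallelogram ipP u1 u2.
have := ipnorm_sqr_le_opnorm ipP hS (u1 + u2) S_le.
have := ipnorm_sqr_le_opnorm ipP hD (u1 - u2) D_le.
nra.
Qed.

Lemma ipnorm_opmx2_antidiag_le u :
  ipnorm (ip2 ip) (opmx2 (fun _ => 0) X Y (fun _ => 0) u)
  <= 2^-1 * (opnorm ip S + opnorm ip D) * ipnorm (ip2 ip) u.
Proof.
set m := 2^-1 * _.
have m_ge0 : 0 <= m by rewrite mulr_ge0 ?invr_ge0 ?ler0n ?addr_ge0 ?opnorm_ge0.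
have half_le (T : H -> H) v :
    ipnorm ip (T v + T v) <= ipnorm ip (S v) + ipnorm ip (D v) ->
  ipnorm ip (T v) ^+ 2 <= m ^+ 2 * ipnorm ip v ^+ 2.
  rewrite (ipnorm_double ipP) => le2; apply: ipnorm_sqr_le => //.
  have := ipnorm_le_opnorm ipP hS v; have := ipnorm_le_opnorm ipP hD v.
  rewrite /m; lra.
case: u => u1 u2; apply: ipnorm_ip2_le => //=.
rewrite add0r addr0 addrC mulrDr; apply: lerD; apply: half_le.
- rewrite (_ : Y u1 + Y u1 = S u1 - D u1); last first.
    by rewrite opprB [Y u1 - _]addrC addrACA subrr add0r.
  by rewrite -(ipnormN ipP (D u1)) ipnormD.
- rewrite (_ : X u2 + X u2 = S u2 + D u2); last by rewrite addrACA subrr addr0.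
  exact: ipnormD.
Qed.

Lemma wq_opmx2_sym_le :
  wq (ip2 ip) q (opmx2 X Y Y X) <= Num.max (opnorm ip D) (opnorm ip S).
Proof.
by apply: (wq_le ip2P q ipnorm_opmx2_sym_le); rewrite le_max opnorm_ge0.
Qed.

Lemma wq_opmx2_antidiag_le : wq (ip2 ip) q (opmx2 (fun _ => 0) X Y (fun _ => 0))
  <= 2^-1 * (opnorm ip S + opnorm ip D).
Proof.
apply: (wq_le ip2P q ipnorm_opmx2_antidiag_le).
by rewrite mulr_ge0 ?invr_ge0 ?ler0n ?addr_ge0 ?opnorm_ge0.
Qed.

Lemma wq_opmx2_sym_ge :
  Num.max (wq ip q D) (wq ip q S) <= wq (ip2 ip) q (opmx2 X Y Y X).
Proof.
have boundT := Wq_normc_le ip2P (q := q) ipnorm_opmx2_sym_le.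
have unitN1 : -1 * conjc (-1) = 1 :> R[i] by rewrite rmorphN1 mulrNN mulr1.
have unit1 : 1 * conjc 1 = 1 :> R[i] by rewrite rmorph1 mulr1.
have two_neq0 : 2%:R != 0 :> R[i] by rewrite pnatr_eq0.
rewrite ge_max -[wq ip q D]mul1r -[wq ip q S]mul1r -Normc.normc1.
apply/andP; split.
- apply: (wq_ge_compression (ip2_diag_embed ipP unitN1) _ boundT) => x y.
  rewrite (ip2_opmx2_diag_embed ipP unitN1) // rmorphN1 (ipDl ipP) (ipNl ipP).
  by field.
- apply: (wq_ge_compression (ip2_diag_embed ipP unit1) _ boundT) => x y.
  rewrite (ip2_opmx2_diag_embed ipP unit1) // rmorph1 (ipDl ipP).
  by field.
Qed.

Lemma wq_opmx2_antidiag_ge : 2^-1 * Num.max (wq ip q S) (wq ip q D)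
  <= wq (ip2 ip) q (opmx2 (fun _ => 0) X Y (fun _ => 0)).
Proof.
have boundT := Wq_normc_le ip2P (q := q) ipnorm_opmx2_antidiag_le.
have unit1 : 1 * conjc 1 = 1 :> R[i] by rewrite rmorph1 mulr1.
have conj_i : conjc 'i = - 'i :> R[i] by apply/eqP; rewrite eq_complex /= oppr0 !eqxx.
have unit_i : 'i * conjc 'i = 1 :> R[i] by rewrite conj_i mulrN -expr2 sqr_i opprK.
have normc_half : Normc.normc (2^-1 : R[i]) = 2^-1 by rewrite Normc.normcV normc_nat.
have normc_half_i : Normc.normc (2^-1 * 'i : R[i]) = 2^-1.
  by rewrite Normc.normcM normc_half /= expr0n expr1n add0r sqrtr1 mulr1.
rewrite maxr_pMr ?invr_ge0 ?ler0n // ge_max; apply/andP; split.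
- rewrite -{1}normc_half.
  apply: (wq_ge_compression (ip2_diag_embed ipP unit1) _ boundT) => x y.
  rewrite (ip2_opmx2_diag_embed ipP unit1) // rmorph1 (ipDl ipP) !(ip0l ipP).
  by rewrite !mul1r addr0 add0r.
- rewrite -{1}normc_half_i.
  apply: (wq_ge_compression (ip2_diag_embed ipP unit_i) _ boundT) => x y.
  rewrite (ip2_opmx2_diag_embed ipP unit_i) // conj_i (ipDl ipP) (ipNl ipP).
  by rewrite !(ip0l ipP) add0r addr0 mulNr -mulrBr mulrA.
Qed.

End BlockOperators.

Theorem proposition3p1 (R : realType) (H : lmodType (R[i])) (ip : H -> H -> R[i])
  (hH : is_hilbert ip) (X Y : H -> H)
  (hX : bounded_linear ip X) (hY : bounded_linear ip Y)
  (q : R[i]) (hq0 : q != 0) (hq1 : Normc.normc q <= 1) :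
  (Num.max (wq ip q (fun x => X x - Y x)) (wq ip q (fun x => X x + Y x))
     <= wq (ip2 ip) q (opmx2 X Y Y X)
   /\ wq (ip2 ip) q (opmx2 X Y Y X)
     <= Num.max (opnorm ip (fun x => X x - Y x)) (opnorm ip (fun x => X x + Y x)))
  /\
  (2^-1 * Num.max (wq ip q (fun x => X x + Y x)) (wq ip q (fun x => X x - Y x))
     <= wq (ip2 ip) q (opmx2 (fun _ => 0) X Y (fun _ => 0))
   /\ wq (ip2 ip) q (opmx2 (fun _ => 0) X Y (fun _ => 0))
     <= 2^-1 * (opnorm ip (fun x => X x + Y x) + opnorm ip (fun x => X x - Y x))).
Proof.
have ipP := hilbert_inner_product hH.
split; split.
- exact (wq_opmx2_sym_ge ipP q hX hY).
- exact (wq_opmx2_sym_le ipP q hX hY).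
- exact (wq_opmx2_antidiag_ge ipP q hX hY).
- exact (wq_opmx2_antidiag_le ipP q hX hY).
Qed.
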